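(* Let $N$ be a normal subgroup of a finite group $G$ and let $\eta^*(N)$ be the number of $G$-orbits on the set of $N$-conjugacy classes of maximal cyclic subgroups of $N$. Then $\eta(G) \ge \eta^*(N)$. In particular: (i) if $N$ is central in $G$, then $\eta(G) \ge \eta(N)$; (ii) if $|G:N| = k$, then $\eta(G) \ge \eta(N)/k$.
   Context: A cyclic subgroup $C$ of a finite group $G$ is maximal cyclic if there is no cyclic subgroup $D$ of $G$ with $C < D$. $\eta(G)$ denotes the number of conjugacy classes of maximal cyclic subgroups of $G$. *)

From HB Require Import structures.
From mathcomp Require Import all_boot all_order all_algebra all_fingroup all_solvable.
Set Implicit Arguments. Unset Strict Implicit. Unset Printing Implicit Defensive.
Import GRing.Theory Num.Theory.

Local Open Scope group_scope.

Section MaxCyclic.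
Variable gT : finGroupType.

Definition maxcyclic (G : {set gT}) : {set {group gT}} :=
  [set C : {group gT} | [max C | (C \subset G) && cyclic C]].

Definition eta (G : {group gT}) : nat :=
  #|orbit 'JG G @: maxcyclic G|.

Definition Nclasses_maxcyclic (N : {group gT}) : {set {set {group gT}}} :=
  orbit 'JG N @: maxcyclic N.

Definition eta_star (G N : {group gT}) : nat :=
  #|orbit ('JG)^* G @: Nclasses_maxcyclic N|.

End MaxCyclic.

From mathcomp Require Import all_boot all_order all_algebra all_fingroup all_solvable.
Set Implicit Arguments. Unset Strict Implicit. Unset Printing Implicit Defensive.
Import GRing.Theory Num.Theory.
Local Open Scope group_scope.

(* Every maximal cyclic subgroup D of N lies in some maximal cyclic subgroup C
   of G, and then D = C :&: N.  Since G normalises N, the N-class of C :&: N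
   only depends on the G-class of C, and the G-orbit of that N-class only on
   the G-class of C; this maps the G-classes of maximal cyclic subgroups of G
   onto the G-orbits of N-classes, whence eta*(N) <= eta(G).  N fixes each of
   its own classes, so such a G-orbit has at most |G : N| elements (giving
   eta(N) <= |G : N| eta*(N)), and only one when N is central. *)

Lemma leq_card_imset_factor (T U V : finType) (S : {set T}) (f : T -> U) (g : T -> V) :
  {in S &, forall x y, g x = g y -> f x = f y} -> #|f @: S| <= #|g @: S|.
Proof.
move=> fg; have [->|[x0 Sx0]] := set_0Vmem S; first by rewrite !imset0 cards0.
pose h v := if [pick x in S | g x == v] is Some x then f x else f x0.
have sub_fh : f @: S \subset h @: (g @: S).
  apply/subsetP => _ /imsetP[x Sx ->]; apply/imsetP; exists (g x); first exact: imset_f.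
  rewrite /h; case: pickP => [y /andP[Sy /eqP gyx] | /(_ x)]; first by rewrite (fg y x).
  by rewrite Sx eqxx.
exact: leq_trans (subset_leq_card sub_fh) (leq_imset_card _ _).
Qed.

Lemma leq_card_bigcup (T I : finType) (P : {set I}) (F : I -> {set T}) :
  #|\bigcup_(i in P) F i| <= \sum_(i in P) #|F i|.
Proof.
elim/big_rec2: _ => [|i B n _ IH]; first by rewrite cards0.
by apply: leq_trans (leq_card_setU _ _).1 _; rewrite leq_add2l.
Qed.

Section MaxCyclicClasses.
Variable gT : finGroupType.
Implicit Types G N C D : {group gT}.

Lemma maxcyclic_setI_sub G N D : N \subset G -> D \in maxcyclic N ->
  exists2 C, C \in maxcyclic G & D = (C :&: N)%G.
Proof.
move=> sNG; rewrite inE => /maxgroupP[/andP[sDN cycD] maxD].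
have [|C maxC sDC] := @maxgroup_exists _ (fun C => (C \subset G) && cyclic C) D.
  by rewrite (subset_trans sDN sNG) cycD.
exists C; first by rewrite inE.
have [/andP[_ cycC] _] := maxgroupP maxC.
apply: val_inj; symmetry; apply: maxD; last by rewrite subsetI sDC sDN.
by rewrite subsetIr (cyclicS (subsetIl _ _) cycC).
Qed.

Lemma orbitJG_conj N D g : g \in 'N(N) ->
  orbit 'JG N ('JG%act D g) = ('JG^*)%act (orbit 'JG N D) g.
Proof.
move=> nNg; apply/setP => Y.
rewrite -{1}(actKV 'JG g Y) -{1}(normP nNg) orbit_conjsg.
apply/idP/imsetP => [NDY | [Z NDZ ->]]; last by rewrite actK.
by exists ('JG%act Y g^-1); rewrite ?actKV.
Qed.

Lemma eta_star_leq_eta G N : N <| G -> eta_star G N <= eta G.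
Proof.
case/andP=> sNG nNG.
pose psi C := orbit 'JG^* G (orbit 'JG N (C :&: N)%G).
have sub_psi : orbit 'JG^* G @: Nclasses_maxcyclic N \subset psi @: maxcyclic G.
  apply/subsetP => _ /imsetP[_ /imsetP[D maxD ->] ->].
  by have [C maxC ->] := maxcyclic_setI_sub sNG maxD; apply: imset_f.
apply: leq_trans (subset_leq_card sub_psi) _.
apply: leq_card_imset_factor => C C' _ _ GCC'.
have /orbitP[g Gg <-] : C' \in orbit 'JG G C by rewrite GCC' orbit_refl.
have nNg := subsetP nNG g Gg; rewrite /psi.
have ->: ('JG%act C g :&: N)%G = 'JG%act (C :&: N)%G g.
  by apply: val_inj; rewrite /= conjIg (normP nNg).
by rewrite orbitJG_conj // orbit_act.
Qed.

Lemma card_orbit_Nclass_dvd G N X : N <| G -> X \in Nclasses_maxcyclic N ->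
  #|orbit 'JG^* G X| %| #|G : N|.
Proof.
case/andP=> sNG _ /imsetP[D _ ->]; rewrite card_orbit; apply: indexgS.
rewrite subsetI sNG; apply/subsetP => n Nn; apply/astab1P.
by rewrite -orbitJG_conj ?orbit_act ?(subsetP (normG N)).
Qed.

Lemma eta_leq_eta_star_index G N : N <| G -> eta N <= eta_star G N * #|G : N|.
Proof.
move=> nsNG; set orbs := orbit 'JG^* G @: Nclasses_maxcyclic N.
have cover : Nclasses_maxcyclic N \subset \bigcup_(O in orbs) O.
  apply/subsetP => X NX; apply/bigcupP; exists (orbit 'JG^* G X); last exact: orbit_refl.
  exact: imset_f.
rewrite /eta; apply: leq_trans (subset_leq_card cover) _.
apply: leq_trans (leq_card_bigcup orbs (fun O => O)) _.
rewrite /eta_star -sum_nat_const; apply: leq_sum => _ /imsetP[X NX ->].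
by apply: dvdn_leq; [apply: indexg_gt0 | apply: card_orbit_Nclass_dvd].
Qed.

Lemma eta_star_central G N : N \subset 'Z(G) -> eta_star G N = eta N.
Proof.
move=> sNZ; have cGN : G \subset 'C(N) by rewrite centsC (subset_trans sNZ) ?subsetIr.
have orbit_fixed X : X \in Nclasses_maxcyclic N -> orbit 'JG^* G X = [set X].
  case/imsetP=> D /[!inE] /maxgroupP[/andP[sDN _] _] ->; apply/orbit1P/afixP => g Gg.
  have cDg : g \in 'C(D) := subsetP (centS sDN) g (subsetP cGN g Gg).
  rewrite -orbitJG_conj ?(subsetP (cent_sub N)) ?(subsetP cGN) //.
  by congr (orbit _ _ _); apply: val_inj; rewrite /= (normP (subsetP (cent_sub D) g cDg)).
rewrite /eta_star /eta (eq_in_imset orbit_fixed) card_in_imset //.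
by move=> X Y _ _ /set1_inj.
Qed.

End MaxCyclicClasses.

Theorem proposition2p3 (gT : finGroupType) (G N : {group gT}) :
  N <| G ->
  [/\ eta_star G N <= eta G,
      (N \subset 'Z(G) -> eta N <= eta G)
    & forall k : nat, #|G : N| = k ->
        ((eta N)%:R / k%:R <= (eta G)%:R :> rat)%R].
Proof.
move=> nsNG; have eta_starG := eta_star_leq_eta nsNG.
split=> [//| sNZ | k <-]; first by rewrite -(eta_star_central sNZ).
rewrite ler_pdivrMr ?ltr0n ?indexg_gt0 // -natrM ler_nat.
by rewrite (leq_trans (eta_leq_eta_star_index nsNG)) ?leq_mul2r ?eta_starG ?orbT.
Qed.
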